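(* Let $\mathcal{S}\subseteq 2^{[n]}$ be a Sperner family and $h:\mathcal{S}\to 2^{[n]}$ a function with $h(S)\subseteq S$ for every $S\in\mathcal{S}$, and suppose $\mathcal{F}=\mathcal{F}(\mathcal{S},h)$ is s-extremal, $\mathcal{F}\subsetneq 2^{[n]}$, and $\mathrm{Sh}(\mathcal{F})=\mathcal{H}(\mathcal{S})$. Then there exists $F\in 2^{[n]}\setminus\mathcal{F}$ such that $\mathcal{F}\cup\{F\}$ is s-extremal if and only if there exists $S_0\in\mathcal{S}$ such that $\mathcal{Q}_{S_0,h(S_0)}\not\subseteq\bigcup_{S\in\mathcal{S}\setminus\{S_0\}}\mathcal{Q}_{S,h(S)}$.
   Context: $[n]=\{1,\dots,n\}$. A Sperner family is a family of sets none of which is contained in another. $\mathcal{F}$ shatters $S$ if $\{F\cap S:F\in\mathcal{F}\}=2^S$; $\mathrm{Sh}(\mathcal{F})$ is the family of shattered sets; $\mathcal{F}$ is s-extremal if $|\mathrm{Sh}(\mathcal{F})|=|\mathcal{F}|$. For $H\subseteq S\subseteq[n]$, $\mathcal{Q}_{S,H}=\{H\cup B: B\subseteq[n]\setminus S\}$. $\mathcal{H}(\mathcal{S})=\{F\subseteq[n]: \text{no } S\in\mathcal{S} \text{ satisfies } S\subseteq F\}$, and $\mathcal{F}(\mathcal{S},h)=2^{[n]}\setminus\bigcup_{S\in\mathcal{S}}\mathcal{Q}_{S,h(S)}$. *)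

From mathcomp Require Import all_boot.
Set Implicit Arguments. Unset Strict Implicit. Unset Printing Implicit Defensive.

Definition sperner n (S : {set {set 'I_n}}) : Prop :=
  forall A B, A \in S -> B \in S -> A \subset B -> A = B.

Definition shatters n (F : {set {set 'I_n}}) (X : {set 'I_n}) : bool :=
  [set F0 :&: X | F0 in F] == powerset X.

Definition Sh n (F : {set {set 'I_n}}) : {set {set 'I_n}} :=
  [set X | shatters F X].

Definition s_extremal n (F : {set {set 'I_n}}) : Prop := #|Sh F| = #|F|.

Definition Q n (S H : {set 'I_n}) : {set {set 'I_n}} :=
  [set H :|: B | B in powerset (~: S)].

Definition HS n (S : {set {set 'I_n}}) : {set {set 'I_n}} :=
  [set F : {set 'I_n} | [forall X in S, ~~ (X \subset F)]].

Definition FSh n (S : {set {set 'I_n}}) (h : {set 'I_n} -> {set 'I_n})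
  : {set {set 'I_n}} :=
  ~: \bigcup_(X in S) Q X (h X).

From mathcomp Require Import all_boot zify.
Set Implicit Arguments. Unset Strict Implicit. Unset Printing Implicit Defensive.

(* Pajor's lemma |F| <= |Sh F| follows by splitting F on a point x; in the equality
   case every shattered set Y is strongly shattered: some B disjoint from Y has
   B ∪ Z ∈ F for all Z ⊆ Y.  In F' = F(S,h) ∪ {F}, the set F is the only member
   whose trace on some S ∈ S is h(S), so a set shattered by F' outside H(S) must be
   some S0 ∈ S with F ∈ Q_{S0,h(S0)}.  If F' is s-extremal it shatters more sets than
   F(S,h), so such an S0 exists, and strong shattering of S0 together with the
   Sperner property keeps F out of every other Q_{S,h(S)}.  Conversely, if F lies
   in Q_{S0,h(S0)} only, then Sh(F') ⊆ {S0} ∪ H(S), and Pajor's lemma forces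
   equality, so F' is s-extremal. *)

Section Shattering.
Variable n : nat.
Implicit Types (G : {set {set 'I_n}}) (A B Y Z D : {set 'I_n}) (x : 'I_n).

Lemma ShP G Y :
  reflect (forall Z, Z \subset Y -> exists2 A, A \in G & A :&: Y = Z) (Y \in Sh G).
Proof.
rewrite inE; apply: (iffP eqP) => [EG Z sZY|realize].
  have : Z \in powerset Y by rewrite powersetE.
  by rewrite -EG => /imsetP[A AG ->]; exists A.
apply/setP => Z; rewrite powersetE.
apply/imsetP/idP => [[A _ ->]|/realize[A AG <-]]; last by exists A.
exact: subsetIr.
Qed.

Lemma ShS G G' : G \subset G' -> Sh G \subset Sh G'.
Proof.
move=> sGG'; apply/subsetP => Y /ShP realize; apply/ShP => Z /realize[A AG <-].
by exists A; rewrite ?(subsetP sGG').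
Qed.

Lemma Sh_downclosed G Y Z : Y \in Sh G -> Z \subset Y -> Z \in Sh G.
Proof.
move=> /ShP realize sZY; apply/ShP => W sWZ.
have [A AG EA] := realize W (subset_trans sWZ sZY); exists A => //.
by rewrite -(setIidPr sZY) setIA EA (setIidPl sWZ).
Qed.

Lemma Sh_sub_powerset G D : G \subset powerset D -> Sh G \subset powerset D.
Proof.
move=> sGD; apply/subsetP => Y /ShP realize; rewrite powersetE.
have [A AG <-] := realize Y (subxx Y).
by apply: subset_trans (subsetIl A Y) _; rewrite -powersetE (subsetP sGD).
Qed.

Lemma setU1I_notin x A Y : x \notin Y -> (x |: A) :&: Y = A :&: Y.
Proof.
move=> xY; apply/setP => y; rewrite !inE.
by case: eqP => [->|]; rewrite ?(negbTE xY) ?andbF.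
Qed.

Definition strongly_shatters G Y :=
  exists2 B : {set 'I_n}, [disjoint B & Y] & forall Z, Z \subset Y -> B :|: Z \in G.

Lemma strongly_shatters_set0 G : set0 \in Sh G -> strongly_shatters G set0.
Proof.
move=> /ShP/(_ set0 (sub0set _))[A AG _]; exists A; first by rewrite -setI_eq0 setI0.
by move=> Z; rewrite subset0 => /eqP->; rewrite setU0.
Qed.

End Shattering.

Section Split.
Variable n : nat.
Implicit Types (G : {set {set 'I_n}}) (A B Y Z D : {set 'I_n}) (x : 'I_n).

Lemma card_imset_setU1 x G :
  (forall A, A \in G -> x \notin A) -> #|[set x |: A | A in G]| = #|G|.
Proof.
move=> avoid; apply: card_in_imset => A1 A2 /avoid xA1 /avoid xA2 E.
by rewrite -(setU1K xA1) E setU1K.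
Qed.

Definition deletion x G : {set {set 'I_n}} := [set A in G | x \notin A].
Definition contraction x G : {set {set 'I_n}} :=
  [set A : {set 'I_n} | (x \notin A) && (x |: A \in G)].

Variables (x : 'I_n) (G : {set {set 'I_n}}).
Local Notation G0 := (deletion x G).
Local Notation G1 := (contraction x G).

Lemma in_split_union A :
  (A \in G0 :|: G1) = (x \notin A) && ((A \in G) || (x |: A \in G)).
Proof. by rewrite !inE; case: (A \in G); case: (x \in A). Qed.

Lemma in_split_inter A :
  (A \in G0 :&: G1) = [&& x \notin A, A \in G & x |: A \in G].
Proof. by rewrite !inE; case: (A \in G); case: (x \in A). Qed.

Lemma card_deletion_contraction : #|G| = #|G0 :|: G1| + #|G0 :&: G1|.
Proof.
have G1_avoid A : A \in G1 -> x \notin A by rewrite inE => /andP[].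
have withx : G :&: [set A : {set 'I_n} | x \in A] = [set x |: A | A in G1].
  apply/setP => A; rewrite !inE; apply/andP/imsetP => [[AG xA]|[C]].
    by exists (A :\ x); rewrite ?inE ?setD1K ?eqxx.
  by rewrite inE => /andP[_ CG] ->; rewrite setU11.
rewrite cardsUI -(cardsID [set A : {set 'I_n} | x \in A] G) addnC.
congr (_ + _); first by apply: eq_card => A; rewrite !inE andbC.
by rewrite withx card_imset_setU1.
Qed.

Lemma split_sub_powerset D :
  G \subset powerset D -> G0 :|: G1 \subset powerset (D :\ x).
Proof.
move=> sGD; apply/subsetP => A; rewrite in_split_union powersetE subsetD1.
case/andP=> -> /orP[AG|xAG]; rewrite andbT.
  by rewrite -powersetE (subsetP sGD).
by apply: subset_trans (subsetUr [set x] A) _; rewrite -powersetE (subsetP sGD).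
Qed.

Lemma Sh_split_avoid Y : Y \in Sh (G0 :|: G1) -> x \notin Y.
Proof.
have sGT : G \subset powerset setT by apply/subsetP => A _; rewrite powersetE subsetT.
move/(subsetP (Sh_sub_powerset (split_sub_powerset sGT))).
by rewrite powersetE subsetD1 => /andP[].
Qed.

Lemma Sh_inter_split_avoid Y : Y \in Sh (G0 :&: G1) -> x \notin Y.
Proof.
move=> /(subsetP (ShS (subsetIl G0 G1)))/(subsetP (ShS (subsetUl G0 G1))).
exact: Sh_split_avoid.
Qed.

Lemma Sh_split_sub : Sh (G0 :|: G1) :|: [set x |: Y | Y in Sh (G0 :&: G1)] \subset Sh G.
Proof.
rewrite subUset; apply/andP; split; apply/subsetP.
  move=> Y YS; have xY := Sh_split_avoid YS; move/ShP: YS => realize.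
  apply/ShP => Z /realize[A]; rewrite in_split_union => /andP[_ /orP[AG|xAG]] <-.
    by exists A.
  by exists (x |: A); rewrite ?setU1I_notin.
move=> _ /imsetP[Y YS ->]; have xY := Sh_inter_split_avoid YS; move/ShP: YS => realize.
apply/ShP => Z sZ.
have sZY : Z :\ x \subset Y by rewrite subDset.
have [A] := realize _ sZY; rewrite in_split_inter => /and3P[xA AG xAG] EA.
have EAx : A :&: (x |: Y) = Z :\ x.
  by rewrite setIC setU1I_notin // setIC EA.
case xZ: (x \in Z).
  by exists (x |: A); rewrite // -setUIr EA setD1K.
by exists A; rewrite // EAx; apply/setDidPl; rewrite disjoint_sym disjoints1 xZ.
Qed.

Lemma card_Sh_split :
  #|Sh (G0 :|: G1) :|: [set x |: Y | Y in Sh (G0 :&: G1)]| =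
  #|Sh (G0 :|: G1)| + #|Sh (G0 :&: G1)|.
Proof.
have disj : Sh (G0 :|: G1) :&: [set x |: Y | Y in Sh (G0 :&: G1)] = set0.
  apply/setP => Y; rewrite in_setI in_set0.
  apply/negbTE/andP => -[/Sh_split_avoid xY /imsetP[Y' _ EY]].
  by rewrite EY setU11 in xY.
rewrite cardsU disj cards0 subn0 card_imset_setU1 //.
exact: Sh_inter_split_avoid.
Qed.

Lemma strongly_shatters_lift Y :
  strongly_shatters (G0 :&: G1) Y -> strongly_shatters G (x |: Y).
Proof.
move=> [B dBY realize].
have /and3P[xB _ _] : [&& x \notin B, B \in G & x |: B \in G].
  by rewrite -in_split_inter -(setU0 B) realize ?sub0set.
exists B.
  by rewrite -setI_eq0 setIC setU1I_notin // setIC setI_eq0.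
move=> Z sZ; have sZY : Z :\ x \subset Y by rewrite subDset.
have := realize _ sZY; rewrite in_split_inter => /and3P[_ BZG xBZG].
have [xZ|xZ] := boolP (x \in Z); first by rewrite -(setD1K xZ) setUCA.
by move: BZG; rewrite (setDidPl _) // disjoint_sym disjoints1.
Qed.

End Split.

Section Pajor.
Variable n : nat.
Implicit Types (G : {set {set 'I_n}}) (A B Y Z D : {set 'I_n}) (x : 'I_n).

Lemma set0_in_Sh G : (set0 \in Sh G) = (G != set0).
Proof.
apply/ShP/set0Pn => [/(_ set0 (sub0set _))[A AG _]|[A AG] Z]; first by exists A.
by rewrite subset0 => /eqP->; exists A; rewrite ?setI0.
Qed.

Definition pajor_property G :=
  #|G| <= #|Sh G| /\ (s_extremal G -> forall Y, Y \in Sh G -> strongly_shatters G Y).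

Lemma pajor_property_set0 G : G \subset powerset set0 -> pajor_property G.
Proof.
move=> sG0; split.
  have [->|nG0] := eqVneq G set0; first by rewrite cards0.
  have := subset_leq_card sG0; rewrite card_powerset cards0 => leG1.
  apply: leq_trans leG1 _; rewrite card_gt0; apply/set0Pn.
  by exists set0; rewrite set0_in_Sh.
move=> _ Y YS; move/subsetP: (Sh_sub_powerset sG0) => /(_ Y YS).
rewrite powersetE subset0 => /eqP Y0.
by rewrite Y0 in YS *; apply: strongly_shatters_set0.
Qed.

Lemma pajor_split x G :
  pajor_property (deletion x G :|: contraction x G) ->
  pajor_property (deletion x G :&: contraction x G) ->
  #|G| <= #|Sh G| /\
  (s_extremal G -> forall Y, Y \in Sh G -> x \in Y -> strongly_shatters G Y).
Proof.
move=> [leU _] [leI tightI].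
have leSh := subset_leq_card (Sh_split_sub x G); rewrite card_Sh_split in leSh.
have leG := card_deletion_contraction x G.
split=> [|ext Y YS xY]; first lia.
(* If [#|Sh G| = #|G|], every inequality of the split count is tight. *)
have extI : s_extremal (deletion x G :&: contraction x G).
  by rewrite /s_extremal in ext *; lia.
have splitE : Sh (deletion x G :|: contraction x G) :|:
    [set x |: Y | Y in Sh (deletion x G :&: contraction x G)] = Sh G.
  by apply/eqP; rewrite eqEcard Sh_split_sub card_Sh_split ext leG leq_add.
move: YS; rewrite -splitE in_setU => /orP[/Sh_split_avoid|/imsetP[Y' Y'S ->]].
  by rewrite xY.
exact/strongly_shatters_lift/tightI.
Qed.

Lemma pajor_property_sub D G : G \subset powerset D -> pajor_property G.
Proof.
have [k] := ubnP #|D|; elim: k D G => // k IHk D G ltDk sGD.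
have [D0|[x xD]] := set_0Vmem D; first by apply: pajor_property_set0; rewrite -D0.
have step y : y \in D -> #|G| <= #|Sh G| /\
    (s_extremal G -> forall Y, Y \in Sh G -> y \in Y -> strongly_shatters G Y).
  move=> yD; have ltDy : #|D :\ y| < k by move: ltDk; rewrite (cardsD1 y) yD.
  have sU := split_sub_powerset y sGD.
  have sI : deletion y G :&: contraction y G \subset powerset (D :\ y).
    by apply: subset_trans sU; apply: subset_trans (subsetIl _ _) (subsetUl _ _).
  by apply: pajor_split; apply: IHk ltDy _.
split=> [|ext Y YS]; first exact: (step x xD).1.
have [Y0|[y yY]] := set_0Vmem Y.
  by rewrite Y0 in YS *; apply: strongly_shatters_set0.
have /subsetP YD : Y \subset D by rewrite -powersetE (subsetP (Sh_sub_powerset sGD)).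
exact: (step y (YD y yY)).2.
Qed.

Lemma pajor_propertyT G : pajor_property G.
Proof.
by apply: (@pajor_property_sub setT); apply/subsetP => A; rewrite powersetE subsetT.
Qed.

Lemma pajor G : #|G| <= #|Sh G|.
Proof. exact: (pajor_propertyT G).1. Qed.

Lemma s_extremal_strongly_shatters G Y :
  s_extremal G -> Y \in Sh G -> strongly_shatters G Y.
Proof. by move=> ext; apply: (pajor_propertyT G).2. Qed.

End Pajor.

Section Traces.
Variable n : nat.
Implicit Types (A H T X Y : {set 'I_n}) (z : 'I_n).

Lemma mem_Q X H A : H \subset X -> (A \in Q X H) = (A :&: X == H).
Proof.
move=> sHX; apply/imsetP/eqP => [[B]|<-].
  rewrite powersetE -disjoints_subset => dBX ->.
  by rewrite setIUl (setIidPl sHX) (disjoint_setI0 dBX) setU0.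
by exists (A :\: X); rewrite ?setID // powersetE setDE subsetIr.
Qed.

Lemma exists_other_trace H X Y z : z \in Y -> z \notin X -> H \subset Y ->
  exists T, [/\ T \subset Y, T :&: X = H :&: X & T != H].
Proof.
move=> zY zX sHY; have [zH|zH] := boolP (z \in H).
  exists (H :\ z); split; first exact: subset_trans (subsetDl _ _) sHY.
    apply/setP => y; rewrite !inE.
    by case: (y =P z) => // ->; rewrite (negbTE zX) !andbF.
  by apply/negP => /eqP E; rewrite -E setD11 in zH.
exists (z |: H); split; first by rewrite subUset sub1set zY.
  exact: setU1I_notin.
by apply/negP => /eqP E; rewrite -E setU11 in zH.
Qed.

End Traces.

Section Extension.
Variables (n : nat) (S : {set {set 'I_n}}) (h : {set 'I_n} -> {set 'I_n}).
Hypothesis h_sub : forall X, X \in S -> h X \subset X.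
Implicit Types (A F X Y : {set 'I_n}) (y : 'I_n).

Lemma FShPn A : reflect (exists2 X, X \in S & A :&: X = h X) (A \notin FSh S h).
Proof.
rewrite inE negbK; apply: (iffP bigcupP) => -[X XS AX]; exists X => //.
  by apply/eqP; rewrite -mem_Q ?h_sub.
by rewrite mem_Q ?h_sub // AX.
Qed.

Lemma HSPn Y : reflect (exists2 X, X \in S & X \subset Y) (Y \notin HS S).
Proof.
rewrite inE negb_forall; apply: (iffP existsP) => -[X].
  by rewrite negb_imply negbK => /andP[]; exists X.
by move=> XS sXY; exists X; rewrite XS sXY.
Qed.

Lemma notin_HS X : X \in S -> X \notin HS S.
Proof. by move=> XS; apply/HSPn; exists X. Qed.

Lemma setU1_FSh_trace F A X :
  A \in F |: FSh S h -> X \in S -> A :&: X = h X -> A = F.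
Proof.
rewrite in_setU1 => /orP[/eqP //|AF] XS AX.
have AnF : A \notin FSh S h by apply/FShPn; exists X.
by rewrite AF in AnF.
Qed.

Lemma Sh_setU1_FSh_trace F X :
  X \in S -> X \in Sh (F |: FSh S h) -> F :&: X = h X.
Proof.
move=> XS /ShP/(_ _ (h_sub XS))[A AG AX].
by rewrite -(setU1_FSh_trace AG XS AX).
Qed.

(* Both [h X] and [y |: h X] restrict to [h X] on [X], so both would be traces of [F]. *)
Lemma Sh_setU1_FSh_extension F X y :
  X \in S -> y \notin X -> y |: X \notin Sh (F |: FSh S h).
Proof.
move=> XS yX; apply/negP => /ShP realize; have hX := h_sub XS.
have onX A : A :&: (y |: X) :&: X = A :&: X by rewrite -setIA (setIidPr (subsetUr _ _)).
have [A1 A1G E1] := realize (h X) (subset_trans hX (subsetUr _ _)).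
have [A2 A2G E2] := realize (y |: h X) (setUS _ hX).
have F1 : A1 = F by apply: (setU1_FSh_trace A1G XS); rewrite -onX E1 (setIidPl hX).
have F2 : A2 = F.
  by apply: (setU1_FSh_trace A2G XS); rewrite -onX E2 setU1I_notin // (setIidPl hX).
have : y \in A2 :&: (y |: X) by rewrite E2 setU11.
by rewrite F2 -F1 E1 => /(subsetP hX); rewrite (negbTE yX).
Qed.

Lemma Sh_setU1_FSh_new F Y :
  Y \in Sh (F |: FSh S h) -> Y \notin HS S -> Y \in S /\ F :&: Y = h Y.
Proof.
move=> YG /HSPn[X XS sXY].
suff EYX : Y = X by rewrite EYX in YG *; split; last exact: Sh_setU1_FSh_trace.
apply/eqP; rewrite eqEsubset sXY andbT; apply/subsetP => y yY.
apply: contraLR YG => yX; apply: contraNN (Sh_setU1_FSh_extension F XS yX).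
by move/Sh_downclosed; apply; rewrite subUset sub1set yY.
Qed.

End Extension.

Section Directions.
Variables (n : nat) (S : {set {set 'I_n}}) (h : {set 'I_n} -> {set 'I_n}).
Hypothesis h_sub : forall X, X \in S -> h X \subset X.
Hypothesis FSh_extremal : s_extremal (FSh S h).
Hypothesis Sh_FSh : Sh (FSh S h) = HS S.
Implicit Types (F T X Y : {set 'I_n}).

(* Strong shattering gives [F = B :|: h Y]; changing [h Y] outside [X] keeps the
   trace [h X] on [X], which only [F] can have. *)
Lemma Sh_setU1_FSh_unique_cover F X Y : sperner S ->
  s_extremal (F |: FSh S h) -> Y \in S -> Y \in Sh (F |: FSh S h) ->
  X \in S -> F :&: X = h X -> X = Y.
Proof.
move=> spS ext YS YG XS FX; have FY := Sh_setU1_FSh_trace h_sub YS YG.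
have [B dBY realize] := s_extremal_strongly_shatters ext YG.
have onY T : T \subset Y -> (B :|: T) :&: Y = T.
  by move=> sTY; rewrite setIUl (disjoint_setI0 dBY) set0U (setIidPl sTY).
have FB : F = B :|: h Y.
  by apply/esym/(setU1_FSh_trace h_sub (realize _ (h_sub YS)) YS); rewrite onY ?h_sub.
apply/eqP; apply: contraT => nXY.
have [z zY zX] : exists2 z, z \in Y & z \notin X.
  by apply/subsetPn; apply: contra nXY => sYX; rewrite (spS _ _ YS XS sYX).
have [T [sTY TX nTh]] := exists_other_trace zY zX (h_sub YS).
have BTX : (B :|: T) :&: X = h X by rewrite setIUl TX -setIUl -FB.
have BTF := setU1_FSh_trace h_sub (realize _ sTY) XS BTX.
by move: nTh; rewrite -(onY _ sTY) BTF FY eqxx.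
Qed.

Lemma s_extremal_setU1_FSh_unique_cover F : sperner S ->
  F \notin FSh S h -> s_extremal (F |: FSh S h) ->
  exists2 S0, S0 \in S & ~~ (Q S0 (h S0) \subset \bigcup_(X in S :\ S0) Q X (h X)).
Proof.
move=> spS FnF ext.
have [Y YG YnH] : exists2 Y, Y \in Sh (F |: FSh S h) & Y \notin HS S.
  apply/subsetPn; rewrite -Sh_FSh; apply/negP => /subset_leq_card.
  by rewrite ext FSh_extremal cardsU1 FnF ltnn.
have [YS FY] := Sh_setU1_FSh_new h_sub YG YnH.
exists Y => //; apply/subsetPn; exists F; first by rewrite mem_Q ?h_sub // FY.
apply/bigcupP => -[X]; rewrite in_setD1 => /andP[nXY XS].
rewrite mem_Q ?h_sub // => /eqP FX.
by rewrite (Sh_setU1_FSh_unique_cover spS ext YS YG XS FX) eqxx in nXY.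
Qed.

Lemma unique_cover_s_extremal_setU1_FSh S0 : S0 \in S ->
  ~~ (Q S0 (h S0) \subset \bigcup_(X in S :\ S0) Q X (h X)) ->
  exists F, F \notin FSh S h /\ s_extremal (F |: FSh S h).
Proof.
move=> S0S /subsetPn[F FQ FnU].
have FS0 : F :&: S0 = h S0 by apply/eqP; rewrite -mem_Q ?h_sub.
have FnF : F \notin FSh S h by apply/(FShPn h_sub); exists S0.
have cardG : #|F |: FSh S h| = #|FSh S h|.+1 by rewrite cardsU1 FnF.
exists F; split => //.
have sG : Sh (F |: FSh S h) \subset S0 |: HS S.
  apply/subsetP => Y YG; rewrite in_setU1.
  have [_|YnH] := boolP (Y \in HS S); first exact: orbT.
  have [YS FY] := Sh_setU1_FSh_new h_sub YG YnH; rewrite orbF.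
  apply: contraR FnU => nYS0; apply/bigcupP; exists Y; first by rewrite in_setD1 nYS0.
  by rewrite mem_Q ?h_sub // FY.
have S0G : S0 \in Sh (F |: FSh S h).
  apply: contraT => nS0G; have := pajor (F |: FSh S h).
  suff /subset_leq_card : Sh (F |: FSh S h) \subset HS S.
    by rewrite -Sh_FSh FSh_extremal cardG; lia.
  apply/subsetP => Y YG; move/subsetP: sG => /(_ Y YG); rewrite in_setU1.
  by case/orP=> // /eqP EY; rewrite -EY YG in nS0G.
have ShG : Sh (F |: FSh S h) = S0 |: HS S.
  apply/eqP; rewrite eqEsubset sG subUset sub1set S0G -Sh_FSh ShS //.
  exact: subsetUr.
by rewrite /s_extremal ShG cardsU1 notin_HS // -Sh_FSh FSh_extremal cardG.
Qed.

End Directions.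

Theorem lemma17 (n : nat) (S : {set {set 'I_n}}) (h : {set 'I_n} -> {set 'I_n}) :
  sperner S ->
  (forall X, X \in S -> h X \subset X) ->
  s_extremal (FSh S h) ->
  FSh S h != setT ->
  Sh (FSh S h) = HS S ->
  (exists F : {set 'I_n}, F \notin FSh S h /\ s_extremal (F |: FSh S h)) <->
  (exists2 S0, S0 \in S &
     ~~ (Q S0 (h S0) \subset \bigcup_(X in S :\ S0) Q X (h X))).
Proof.
move=> spS h_sub extF _ ShF; split=> [[F [FnF ext]]|[S0 S0S nQ]].
  exact: s_extremal_setU1_FSh_unique_cover ext.
exact: unique_cover_s_extremal_setU1_FSh nQ.
Qed.
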